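(* Let $G_1,\dots,G_k$ be connected graphs, each with at least $2$ vertices. Then $$\gamma(G_1\times G_2\times\cdots\times G_k)=\frac{1}{\sum_{i=1}^k \frac{1}{\gamma(G_i)}}.$$
   Context: For a finite simple undirected graph $G$ with $n$ vertices, let $\mathcal{F}=\{x\in\mathbb{R}^{V(G)} : \sum_{v} x_v = 0,\ \|x\|_\infty = 1\}$, for $x\in\mathcal{F}$ let $\gamma_x(G)=\max_{uv\in E(G)}|x_u-x_v|$, and $\gamma(G)=\min_{x\in\mathcal{F}}\gamma_x(G)$. The Cartesian product $G_1\times\cdots\times G_k$ has vertex set $V(G_1)\times\cdots\times V(G_k)$, with $(u_1,\dots,u_k)\sim(v_1,\dots,v_k)$ iff there is exactly one index $i$ with $u_i\sim v_i$ in $G_i$ and $u_j=v_j$ for all $j\ne i$. *)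

From HB Require Import structures.
From mathcomp Require Import all_boot all_order all_algebra.
From mathcomp Require Import boolp classical_sets reals.
Set Implicit Arguments. Unset Strict Implicit. Unset Printing Implicit Defensive.
Import Order.TTheory GRing.Theory Num.Theory.
Local Open Scope ring_scope.
Local Open Scope classical_set_scope.

(* A finite simple graph: vertex type T : finType, edge relation e : rel T,
   assumed symmetric and irreflexive (as hypotheses of the theorem). *)

Section Gamma.
Variables (R : realType) (T : finType) (e : rel T).

Definition gamma_x (x : T -> R) : R :=
  \big[Order.max/0]_(p : T * T | e p.1 p.2) `|x p.1 - x p.2|.

Definition supnorm (x : T -> R) : R := \big[Order.max/0]_(v : T) `|x v|.

Definition feasible (x : T -> R) : Prop :=
  \sum_(v : T) x v = 0 /\ supnorm x = 1.

(* gamma(G) = min_{x in F} gamma_x(G) (the minimum is attained, so inf = min) *)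
Definition gamma : R := inf [set gamma_x x | x in feasible].
End Gamma.

Definition cart_rel (k : nat) (T : 'I_k -> finType) (e : forall i, rel (T i))
  : rel {dffun forall i : 'I_k, T i} :=
  fun u v => [exists i : 'I_k, e i (u i) (v i) &&
                [forall j : 'I_k, (j != i) ==> (u j == v j)]].

From HB Require Import structures.
From mathcomp Require Import all_boot all_order all_algebra.
From mathcomp Require Import boolp classical_sets reals.
From mathcomp Require Import lra.
Set Implicit Arguments. Unset Strict Implicit. Unset Printing Implicit Defensive.
Import Order.TTheory GRing.Theory Num.Theory.
Local Open Scope ring_scope.
Local Open Scope classical_set_scope.

(* Rescaling a zero-sum vector y to sup norm 1 shows gamma(G) * ||y|| <= gamma_y(G)
   for every zero-sum y.
   Lower bound: for feasible x on the product, pick u with |x u| = 1 and let g_j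
   be the mean of x over the vectors agreeing with u on the coordinates >= j, so
   g_0 = x u and g_k = 0.  As a function of coordinate j, the partial sums
   defining g_(j+1) form a zero-sum vector on G_j whose edge differences are at
   most gamma_x, whence gamma(G_j) |g_j - g_(j+1)| <= gamma_x, and telescoping
   gives 1 <= gamma_x * sum_j 1/gamma(G_j).
   Upper bound: take near-optimal y_i on each factor, normalised so that
   y_i(v_i) = 1, and the combination X(w) = sum_i l_i y_i(w_i) with weights
   l_i proportional to 1/gamma(G_i); X is feasible and each edge of the product
   changes X by at most l_i gamma(G_i) = 1 / sum_j 1/gamma(G_j). *)

Lemma mulr_bigmax0 (R : realDomainType) (I : finType) (P : pred I) (F : I -> R) c :
  0 <= c -> c * \big[Order.max/0]_(i | P i) F i = \big[Order.max/0]_(i | P i) (c * F i).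
Proof. by move=> c0; rewrite (big_morph _ (fun a b => maxr_pMr a b c0) (mulr0 c)). Qed.

Section GammaTheory.
Variables (R : realType) (T : finType) (e : rel T).
Implicit Types (x y : T -> R).

Lemma gamma_x_ge0 x : 0 <= gamma_x e x.
Proof. exact: bigmax_ge_id. Qed.

Lemma le_gamma_x x a b : e a b -> `|x a - x b| <= gamma_x e x.
Proof. by move=> eab; apply: (@le_bigmax_cond _ _ _ _ (a, b)). Qed.

Lemma gamma_x_le x c : 0 <= c -> (forall a b, e a b -> `|x a - x b| <= c) ->
  gamma_x e x <= c.
Proof. by move=> c0 xc; apply: bigmax_le => // -[a b] /xc. Qed.

Lemma le_supnorm x v : `|x v| <= supnorm x.
Proof. exact: le_bigmax. Qed.

Lemma supnorm_ge0 x : 0 <= supnorm x.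
Proof. exact: bigmax_ge_id. Qed.

Lemma supnorm_attained x : 0 < supnorm x -> exists v, supnorm x = `|x v|.
Proof.
move=> sx; have [v _|T0] := pickP (@predT T).
  have [w _ xw] := @eq_bigmax _ _ _ 0 v predT (fun v => `|x v|) isT
    (fun _ _ => normr_ge0 _).
  by exists w.
by move: sx; rewrite /supnorm big_pred0 ?ltxx.
Qed.

Lemma feasible_norm_eq1 x : feasible x -> exists v, `|x v| = 1.
Proof.
move=> [_ nx]; have [|v xv] := @supnorm_attained x; first by rewrite nx ltr01.
by exists v; rewrite -xv.
Qed.

Lemma gamma_xZ c x : gamma_x e (fun v => c * x v) = `|c| * gamma_x e x.
Proof.
rewrite /gamma_x mulr_bigmax0 //.
by apply: eq_bigr => p _; rewrite -mulrBr normrM.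
Qed.

Lemma supnormZ c x : supnorm (fun v => c * x v) = `|c| * supnorm x.
Proof.
rewrite /supnorm mulr_bigmax0 //.
by apply: eq_bigr => v _; rewrite normrM.
Qed.

Local Notation values := [set gamma_x e x | x in @feasible R T].

(* Also for an empty feasible set, since [inf set0 = 0]. *)
Lemma gamma_ge0 : 0 <= gamma R e.
Proof.
rewrite /gamma; have [->|nonempty_values] := eqVneq values set0; first by rewrite inf0.
apply: lb_le_inf; first exact/set0P.
by move=> _ [x _ <-]; exact: gamma_x_ge0.
Qed.

Lemma has_lbound_gamma_x : has_lbound values.
Proof. by exists 0 => _ [y _ <-]; exact: gamma_x_ge0. Qed.

Lemma gamma_le_gamma_x x : feasible x -> gamma R e <= gamma_x e x.
Proof. by move=> fx; apply: ge_inf; [exact: has_lbound_gamma_x|exists x]. Qed.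

Lemma feasible_normalize y : \sum_v y v = 0 -> 0 < supnorm y ->
  feasible (fun v => (supnorm y)^-1 * y v).
Proof.
move=> sy ny; split; first by rewrite -mulr_sumr sy mulr0.
by rewrite supnormZ gtr0_norm ?invr_gt0 // mulVf ?gt_eqF.
Qed.

Lemma gamma_supnorm_le y : \sum_v y v = 0 -> gamma R e * supnorm y <= gamma_x e y.
Proof.
move=> sy; have [y0|ny] := eqVneq (supnorm y) 0.
  by rewrite y0 mulr0 gamma_x_ge0.
have {ny}ny : 0 < supnorm y by rewrite lt_def ny supnorm_ge0.
rewrite -ler_pdivlMr // mulrC -[X in X * _]gtr0_norm ?invr_gt0 // -gamma_xZ.
exact/gamma_le_gamma_x/feasible_normalize.
Qed.

Lemma gamma_x_approx eps : (exists x, feasible x) -> 0 < eps ->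
  exists y v, [/\ feasible y, y v = 1 & gamma_x e y < gamma R e + eps].
Proof.
move=> [x fx] eps0.
have [_ [y fy <-] y_eps] : exists2 g, values g & g < gamma R e + eps.
  apply: inf_adherent => //; split; last exact: has_lbound_gamma_x.
  by exists (gamma_x e x), x.
have [v yv] := feasible_norm_eq1 fy; have [sy ny] := fy.
exists (fun w => y v * y w), v; split.
- by split; rewrite ?supnormZ -?mulr_sumr ?sy ?mulr0 // yv ny mulr1.
- by rewrite -expr2 -real_normK ?num_real // yv expr1n.
- by rewrite gamma_xZ yv mul1r.
Qed.

Lemma feasible_exists : (1 < #|T|)%N -> exists x : T -> R, feasible x.
Proof.
move=> /card_gt1P[a [b [_ _ ab]]].
pose x v : R := (v == a)%:R - (v == b)%:R.
have xa : x a = 1 by rewrite /x eqxx (negbTE ab) subr0.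
exists x; split.
  have sum_ind c : \sum_v ((v == c)%:R : R) = 1.
    by rewrite (bigD1 c) //= eqxx big1 ?addr0 // => v /negbTE ->.
  by rewrite sumrB !sum_ind subrr.
apply/le_anti/andP; split; last by rewrite -normr1 -[in X in `|X|]xa le_supnorm.
apply: bigmax_le => // v _; rewrite /x.
by case: (v == a); case: (v == b); rewrite /= ?subrr ?subr0 ?sub0r ?normrN ?normr1 ?normr0.
Qed.

Lemma path_dist_le x a p : path e a p ->
  `|x a - x (last a p)| <= (size p)%:R * gamma_x e x.
Proof.
elim: p a => [|b p IHp] a /=; first by rewrite subrr normr0 mul0r.
move=> /andP[eab pb]; rewrite -add1n natrD mulrDl mul1r.
rewrite -[x a - _](subrKA (x b)); apply: le_trans (ler_normD _ _) _.
by rewrite lerD ?le_gamma_x ?IHp.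
Qed.

Lemma connect_dist_le x a b : connect e a b -> `|x a - x b| <= #|T|%:R * gamma_x e x.
Proof.
move=> /connectP[p pp ->]; have [q qq uq _] := shortenP pp.
apply: le_trans (path_dist_le x qq) _; rewrite ler_wpM2r ?gamma_x_ge0 // ler_nat.
by have := max_card (mem (a :: q)); rewrite (card_uniqP uq) => /ltnW.
Qed.

Lemma sum_eq0_opposite_sign x u : \sum_v x v = 0 -> exists v, x v * x u <= 0.
Proof.
move=> sx; have [//|no_neg] := pselect (exists v, x v * x u <= 0).
have all_pos v : 0 < x v * x u.
  by rewrite ltNge; apply/negP => xv; apply: no_neg; exists v.
have : \sum_v x v * x u = 0 by rewrite -mulr_suml sx mul0r.
move/psumr_eq0P => /(_ (fun v _ => ltW (all_pos v)) u isT) /eqP.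
by rewrite gt_eqF ?all_pos.
Qed.

Lemma gamma_x_feasible_ge x : (forall a b, connect e a b) -> feasible x ->
  1 <= #|T|%:R * gamma_x e x.
Proof.
move=> conn fx; have [u xu] := feasible_norm_eq1 fx.
have [v xuv] := sum_eq0_opposite_sign u (proj1 fx).
apply: le_trans (connect_dist_le x (conn u v)); rewrite -xu.
by rewrite -(@ler_pXn2r _ 2) ?nnegrE // !real_normK ?num_real //; nra.
Qed.

Lemma gamma_gt0 : (forall a b, connect e a b) -> (1 < #|T|)%N -> 0 < gamma R e.
Proof.
move=> conn T_gt1; have [x fx] := feasible_exists T_gt1.
have T_gt0 : (0 < #|T|)%N := ltnW T_gt1.
apply: lt_le_trans (_ : #|T|%:R^-1 <= _); first by rewrite invr_gt0 ltr0n.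
apply: lb_le_inf; first by exists (gamma_x e x), x.
move=> _ [y fy <-]; rewrite -[_^-1]mul1r ler_pdivrMr ?ltr0n // mulrC.
exact: gamma_x_feasible_ge.
Qed.
End GammaTheory.

Lemma sumr_ord_gt0 (R : numDomainType) n (a : 'I_n -> R) :
  (0 < n)%N -> (forall i, 0 < a i) -> 0 < \sum_i a i.
Proof.
move=> n0 a_gt0; rewrite (bigD1 (Ordinal n0)) //= ltr_pwDl ?a_gt0 ?sumr_ge0 //.
by move=> i _; rewrite ltW.
Qed.

Section CartesianProduct.
Variables (R : realType) (k : nat) (T : 'I_k -> finType).
Variable e : forall i, rel (T i).
Arguments e : clear implicits.
Local Notation V := {dffun forall i : 'I_k, T i}.

Definition upd (w : V) (j : 'I_k) (a : T j) : V := @finfun _ _ (dfwith (fun i => w i) a).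
Arguments upd w j a : clear implicits.

Lemma upd_in w j a : upd w j a j = a.
Proof. by rewrite ffunE dfwith_in. Qed.

Lemma upd_out w j a i : j != i -> upd w j a i = w i.
Proof. by move=> ji; rewrite ffunE dfwith_out. Qed.

Lemma upd_id w j : upd w j (w j) = w.
Proof.
by apply/ffunP => i; have [<-|ji] := eqVneq j i; rewrite ?upd_in ?upd_out.
Qed.

Lemma upd_upd w j a b : upd (upd w j a) j b = upd w j b.
Proof.
by apply/ffunP => i; have [<-|ji] := eqVneq j i; rewrite ?upd_in ?upd_out.
Qed.

Lemma upd_eq w j a : (upd w j a == w) = (w j == a).
Proof. by apply/eqP/eqP => [<-|<-]; rewrite ?upd_in ?upd_id. Qed.

Lemma cart_rel_upd w j a b : e j a b -> cart_rel e (upd w j a) (upd w j b).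
Proof.
move=> eab; apply/existsP; exists j; rewrite !upd_in eab /=.
by apply/forallP => i; apply/implyP => ij; rewrite !upd_out // eq_sym.
Qed.

Lemma sum_upd_fiber {j : 'I_k} (a0 : T j) (P : pred V) (F : V -> R) :
  (forall w a, P (upd w j a) = P w) ->
  \sum_(w | P w) F w = \sum_(a : T j) \sum_(w | P w && (w j == a0)) F (upd w j a).
Proof.
move=> Pupd; rewrite (partition_big (fun w : V => w j) xpredT) //.
apply: eq_bigr => a _.
rewrite (reindex_onto (fun w => upd w j a) (fun w => upd w j a0)); last first.
  by move=> w /andP[_ /eqP <-]; rewrite upd_upd upd_id.
by apply: eq_bigl => w; rewrite Pupd upd_in eqxx upd_upd upd_eq andbT.
Qed.

Lemma sum_coord (j : 'I_k) (a0 : T j) (f : T j -> R) :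
  \sum_(w : V) f (w j) = (\sum_(w : V | w j == a0) 1) * \sum_a f a.
Proof.
rewrite (sum_upd_fiber a0) // mulr_sumr; apply: eq_bigr => a _.
by rewrite mulr_suml; apply: eq_bigr => w _; rewrite upd_in mul1r.
Qed.

(* [agree_from u j] is the slice through u in which only the coordinates < j
   are free: it is [pred1 u] for j = 0 and all of V for j = k. *)
Definition agree_from (u : V) (j : nat) (w : V) :=
  [forall i : 'I_k, (j <= i)%N ==> (w i == u i)].

Lemma agree_from_upd u (j : 'I_k) w a :
  agree_from u j.+1 (upd w j a) = agree_from u j.+1 w.
Proof.
apply: eq_forallb => i; have [<-|ji] := eqVneq j i; first by rewrite ltnn.
by rewrite upd_out.
Qed.

Lemma agree_fromS u (j : 'I_k) w :
  agree_from u j w = agree_from u j.+1 w && (w j == u j).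
Proof.
apply/forallP/andP => [agree | [/forallP agree wj] i].
  by split; [apply/forallP => i; apply/implyP => /ltnW; exact/implyP/agree|
             exact: implyP (agree j) (leqnn j)].
apply/implyP; rewrite leq_eqVlt => /orP[/eqP/val_inj <- //|]; exact/implyP/agree.
Qed.

Lemma sum_agree_fromS u (j : 'I_k) (F : V -> R) :
  \sum_(w | agree_from u j.+1 w) F w =
  \sum_(a : T j) \sum_(w | agree_from u j w) F (upd w j a).
Proof.
rewrite (sum_upd_fiber (u j)); last exact: agree_from_upd.
by apply: eq_bigr => a _; apply: eq_bigl => w; rewrite agree_fromS.
Qed.

Definition slice_size (u : V) (j : nat) : R := \sum_(w | agree_from u j w) 1.

Definition slice_mean (x : V -> R) (u : V) (j : nat) : R :=
  (\sum_(w | agree_from u j w) x w) / slice_size u j.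

Lemma slice_size_gt0 u j : 0 < slice_size u j.
Proof.
rewrite /slice_size (bigD1 u) /=; last by apply/forallP => i; apply/implyP.
by rewrite ltr_pwDl ?sumr_ge0.
Qed.

Lemma slice_sizeS u (j : 'I_k) : slice_size u j.+1 = slice_size u j * #|T j|%:R.
Proof. by rewrite /slice_size sum_agree_fromS sumr_const mulr_natr. Qed.

Lemma slice_mean0 x u : slice_mean x u 0 = x u.
Proof.
have agree0 w : agree_from u 0 w = (w == u).
  apply/forallP/eqP => [agree|-> i]; last exact/implyP.
  by apply/ffunP => i; apply/eqP; exact: implyP (agree i) _.
by rewrite /slice_mean /slice_size !(eq_bigl _ _ agree0) !big_pred1_eq divr1.
Qed.

Lemma slice_mean_full x u : \sum_w x w = 0 -> slice_mean x u k = 0.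
Proof.
move=> sx; rewrite /slice_mean (eq_bigl xpredT) ?sx ?mul0r // => w.
by apply/forallP => i; rewrite leqNgt ltn_ord.
Qed.

Lemma gamma_slice_mean_step x u (j : 'I_k) :
  gamma R (e j) * `|slice_mean x u j - slice_mean x u j.+1| <= gamma_x (cart_rel e) x.
Proof.
set C := slice_size u j; have C_gt0 : 0 < C := slice_size_gt0 u j.
pose H a := \sum_(w | agree_from u j w) x (upd w j a).
pose y a := H a / C - slice_mean x u j.+1.
have yu : y (u j) = slice_mean x u j - slice_mean x u j.+1.
  congr (_ / _ - _); apply: eq_bigr => w; rewrite agree_fromS => /andP[_ /eqP <-].
  by rewrite upd_id.
have sum_y : \sum_a y a = 0.
  rewrite sumrB -mulr_suml sumr_const /slice_mean slice_sizeS -sum_agree_fromS.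
  have n_gt0 : (0 < #|T j|)%N by apply/card_gt0P; exists (u j).
  rewrite -/C invfM mulrA -[_ / C / _ *+ _]mulr_natr mulfVK ?subrr //.
  by rewrite pnatr_eq0 -lt0n n_gt0.
have gamma_y : gamma_x (e j) y <= gamma_x (cart_rel e) x.
  apply: gamma_x_le => [|a b eab]; first exact: gamma_x_ge0.
  rewrite opprB addrA subrK -mulrBl normrM [`|C^-1|]gtr0_norm ?invr_gt0 //.
  rewrite ler_pdivrMr // /H /C /slice_size -sumrB mulr_sumr.
  apply: le_trans (ler_norm_sum _ _ _) _.
  by apply: ler_sum => w _; rewrite mulr1; exact/le_gamma_x/cart_rel_upd.
rewrite -yu; apply: le_trans _ gamma_y.
apply: le_trans _ (gamma_supnorm_le (e j) sum_y).
by rewrite ler_wpM2l ?gamma_ge0 ?le_supnorm.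
Qed.

Lemma gamma_x_cart_ge x : (forall i, 0 < gamma R (e i)) -> feasible x ->
  1 <= gamma_x (cart_rel e) x * \sum_i (gamma R (e i))^-1.
Proof.
move=> gamma_gt0 fx; have [u xu] := feasible_norm_eq1 fx.
have -> : 1 = `|slice_mean x u k - slice_mean x u 0|.
  by rewrite slice_mean_full ?(proj1 fx) // slice_mean0 sub0r normrN xu.
rewrite -(telescope_sumr _ (leq0n k)) big_mkord mulr_sumr.
apply: le_trans (ler_norm_sum _ _ _) _.
apply: ler_sum => j _; rewrite distrC ler_pdivlMr // mulrC.
exact: gamma_slice_mean_step.
Qed.

Definition cart_sum (l : 'I_k -> R) (y : forall i, T i -> R) (w : V) : R :=
  \sum_i l i * y i (w i).

Lemma sum_cart_sum (v : V) l y : (forall i, \sum_a y i a = 0) ->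
  \sum_w cart_sum l y w = 0.
Proof.
move=> sum_y; rewrite exchange_big big1 // => i _.
by rewrite -mulr_sumr (sum_coord (v i) (y i)) sum_y !mulr0.
Qed.

Lemma gamma_x_cart_sum_le l y c : 0 <= c ->
  (forall i, `|l i| * gamma_x (e i) (y i) <= c) -> gamma_x (cart_rel e) (cart_sum l y) <= c.
Proof.
move=> c0 lyc; apply: gamma_x_le => // a b /existsP[i /andP[eab /forallP ab]].
rewrite /cart_sum -sumrB (bigD1 i) //= big1 ?addr0; last first.
  by move=> j ji; rewrite (eqP (implyP (ab j) ji)) subrr.
rewrite -mulrBr normrM; apply: le_trans (lyc i).
by rewrite ler_wpM2l ?normr_ge0 ?le_gamma_x.
Qed.

Lemma supnorm_cart_sum l y (v : V) : (forall i, 0 <= l i) -> \sum_i l i = 1 ->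
  (forall i, supnorm (y i) = 1) -> (forall i, y i (v i) = 1) ->
  supnorm (cart_sum l y) = 1.
Proof.
move=> l_ge0 sum_l ny yv; apply/le_anti/andP; split.
  apply: bigmax_le => // w _; rewrite -sum_l; apply: le_trans (ler_norm_sum _ _ _) _.
  apply: ler_sum => i _; rewrite normrM ger0_norm // ler_piMr //.
  by rewrite -(ny i) le_supnorm.
apply: le_trans (le_supnorm _ v); rewrite /cart_sum (eq_bigr l) ?sum_l ?normr1 //.
by move=> i _; rewrite yv mulr1.
Qed.

Lemma cart_near_optimal eps : 0 < eps -> (0 < k)%N ->
  (forall i, 0 < gamma R (e i)) -> (forall i, exists x : T i -> R, feasible x) ->
  exists2 X, feasible X &
    gamma_x (cart_rel e) X <= (1 + eps) / \sum_i (gamma R (e i))^-1.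
Proof.
move=> eps0 k0 gamma_gt0 feasible_ex.
pose c i := gamma R (e i) * (1 + eps).
have c_gt0 i : 0 < c i by rewrite mulr_gt0 ?gamma_gt0 ?addr_gt0.
have near_opt i : {p : (T i -> R) * T i |
    [/\ feasible p.1, p.1 p.2 = 1 & gamma_x (e i) p.1 <= c i]}.
  apply: cid; have eps_i : 0 < gamma R (e i) * eps by rewrite mulr_gt0.
  have [y [v [fy yv y_le]]] := gamma_x_approx (e i) (feasible_ex i) eps_i.
  by exists (y, v); split=> //; rewrite /c mulrDr mulr1 ltW.
pose y i := (sval (near_opt i)).1.
pose v : V := [ffun i => (sval (near_opt i)).2].
have [fy yv gamma_y] : [/\ forall i, feasible (y i), forall i, y i (v i) = 1 &
    forall i, gamma_x (e i) (y i) <= c i].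
  by split=> i; rewrite ?ffunE; case: (svalP (near_opt i)).
pose S := \sum_i (c i)^-1.
have S_gt0 : 0 < S by apply: sumr_ord_gt0 => // i; rewrite invr_gt0.
pose l i := (c i)^-1 / S.
have l_ge0 i : 0 <= l i by rewrite divr_ge0 ?invr_ge0 ?ltW.
have sum_l : \sum_i l i = 1 by rewrite -mulr_suml mulfV ?gt_eqF.
have fX : feasible (cart_sum l y).
  split; first by apply: (sum_cart_sum v) => i; case: (fy i).
  by apply: (supnorm_cart_sum l_ge0 sum_l _ yv) => i; case: (fy i).
exists (cart_sum l y) => //.
have -> : (1 + eps) / \sum_i (gamma R (e i))^-1 = S^-1.
  rewrite -invf_div mulr_suml; congr _^-1.
  by apply: eq_bigr => i _; rewrite invfM.
apply: gamma_x_cart_sum_le => [|i]; first by rewrite invr_ge0 ltW.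
rewrite ger0_norm //; apply: le_trans (ler_wpM2l (l_ge0 i) (gamma_y i)) _.
by rewrite /l mulrAC mulVf ?mul1r ?gt_eqF.
Qed.
End CartesianProduct.

Theorem theorem5p2 (R : realType) (k : nat) (T : 'I_k -> finType)
  (e : forall i, rel (T i)) :
  (0 < k)%N ->
  (forall i, symmetric (e i)) ->
  (forall i, irreflexive (e i)) ->
  (forall i (u v : T i), connect (e i) u v) ->
  (forall i, 1 < #|T i|)%N ->
  gamma R (cart_rel e) = (\sum_(i < k) (gamma R (e i))^-1)^-1.
Proof.
move=> k0 _ _ conn card.
have gamma_gt0 i : 0 < gamma R (e i) := gamma_gt0 R (conn i) (card i).
have feasible_ex i : exists x : T i -> R, feasible x := feasible_exists R (card i).
set S := \sum_(i < k) _.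
have S_gt0 : 0 < S by apply: sumr_ord_gt0 => // i; rewrite invr_gt0.
apply/le_anti/andP; split.
  apply/ler_addgt0Pr => eps eps0.
  have [X fX X_le] := cart_near_optimal (mulr_gt0 eps0 S_gt0) k0 gamma_gt0 feasible_ex.
  apply: le_trans (gamma_le_gamma_x (cart_rel e) fX) (le_trans X_le _).
  by rewrite mulrDl mul1r -mulrA mulfV ?gt_eqF ?mulr1.
have [X fX _] := cart_near_optimal ltr01 k0 gamma_gt0 feasible_ex.
apply: lb_le_inf; first by exists (gamma_x (cart_rel e) X), X.
move=> _ [Y fY <-]; rewrite -[_^-1]mul1r ler_pdivrMr //.
exact: gamma_x_cart_ge.
Qed.
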